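(* In the setting below, define for $y\in B_r$ $$\psi(y)=\sup_{x\in A:\ \varphi(x)\le|y|}\langle x,y\rangle .$$ Then $\psi(y)=\langle T^{-1}(y),y\rangle$ for $\nu$-almost all $y$.
   Context: Setting: $d\ge2$, $A\subset\mathbb{R}^d$ compact convex, $\mu=\varrho_0\,dx$ a probability measure on $A$ equivalent to Lebesgue measure on $A$, $B_r=\{|x|\le r\}$, $\nu=\varrho_1\,dx$ a probability measure on $B_r$ equivalent to Lebesgue measure on $B_r$. For a compact convex $V$ and $x\in V$, $N_{\partial V,x}=\{\eta\in S^{d-1}:\langle\eta,z-x\rangle\le0\ \forall z\in V\}$. Let $\varphi\colon A\to[0,r]$ be continuous with convex sub-level sets $A_s=\{\varphi\le s\}$; for $x$ with $N_{\partial A_{\varphi(x)},x}$ a singleton let ${\rm n}(x)$ be its element and $T(x)=\varphi(x){\rm n}(x)$ (defined a.e.); assume $\mu\circ T^{-1}=\nu$. $T^{-1}\colon B_r\to A$ denotes a measurable map with $T(T^{-1}(y))=y$ for $\nu$-a.e. $y$ and $T^{-1}(T(x))=x$ for $\mu$-a.e. $x$ (it exists and is $\nu$-a.e. unique). *)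

From HB Require Import structures.
From mathcomp Require Import all_boot all_order all_algebra.
From mathcomp Require Import all_classical all_reals all_analysis.
Set Implicit Arguments. Unset Strict Implicit. Unset Printing Implicit Defensive.
Import Order.TTheory GRing.Theory Num.Theory.
Import numFieldNormedType.Exports.
Local Open Scope classical_set_scope.
Local Open Scope ring_scope.

(* R^d is represented by row vectors 'rV[R]_d, with its usual (product =
   Euclidean) topology; it is equipped with the Borel sigma-algebra, i.e. the
   sigma-algebra generated by the open sets. *)
Definition Rd (R : realType) (d : nat) :=
  g_sigma_algebraType (@open ('rV[R]_d)).

Definition dotv (R : realType) (d : nat) (x y : 'rV[R]_d) : R :=
  \sum_(i < d) x 0 i * y 0 i.
Definition enorm (R : realType) (d : nat) (x : 'rV[R]_d) : R :=
  Num.sqrt (dotv x x).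

Definition cballR (R : realType) (d : nat) (r : R) : set 'rV[R]_d :=
  [set x | enorm x <= r].

Definition convex_setRd (R : realType) (d : nat) (V : set 'rV[R]_d) : Prop :=
  @convex_set R _ (V : set (convex_lmodType 'rV[R]_d)).

Definition box (R : realType) (d : nat) (a b : 'rV[R]_d) : set 'rV[R]_d :=
  [set x | forall i, a 0 i <= x 0 i <= b 0 i].

(* a measure on the Borel sets of R^d is the Lebesgue measure iff it gives
   every box its volume (this determines it uniquely on Borel sets) *)
Definition is_lebesgue (R : realType) (d : nat)
    (leb : {measure set (Rd R d) -> \bar R}) : Prop :=
  forall a b : 'rV[R]_d, (forall i, a 0 i <= b 0 i) ->
    leb (box a b) = (\prod_(i < d) (b 0 i - a 0 i))%:E.

(* a probability measure m on R^d which is "a probability measure on V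
   equivalent to Lebesgue measure on V", i.e. m = rho dx with rho supported
   on V, and m(E) = 0 iff Leb(E /\ V) = 0 *)
Definition equiv_leb_on (R : realType) (d : nat)
    (leb : {measure set (Rd R d) -> \bar R})
    (m : probability (Rd R d) R) (V : set 'rV[R]_d) : Prop :=
  [/\ exists rho : Rd R d -> R,
        [/\ measurable_fun setT rho, (forall x, 0 <= rho x),
            (forall x, ~ V x -> rho x = 0) &
            forall E, measurable E ->
              m E = (\int[leb]_(x in E) (rho x)%:E)%E],
      m (~` V) = 0%E &
      forall E, measurable E -> (m E = 0%E <-> leb (E `&` V) = 0%E)].

Definition normal_cone (R : realType) (d : nat) (V : set 'rV[R]_d)
    (x : 'rV[R]_d) : set 'rV[R]_d :=
  [set eta | enorm eta = 1 /\ forall z, V z -> dotv eta (z - x) <= 0].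

Definition sublevel (R : realType) (d : nat) (A : set 'rV[R]_d)
    (phi : 'rV[R]_d -> R) (s : R) : set 'rV[R]_d :=
  [set x | A x /\ phi x <= s].

(* psi(y) = sup_{x in A, phi x <= |y|} <x, y>  (sup of the empty set = -oo) *)
Definition psi (R : realType) (d : nat) (A : set 'rV[R]_d)
    (phi : 'rV[R]_d -> R) (y : 'rV[R]_d) : \bar R :=
  ereal_sup [set (dotv x y)%:E | x in sublevel A phi (enorm y)].

From HB Require Import structures.
From mathcomp Require Import all_boot all_order all_algebra.
From mathcomp Require Import all_classical all_reals all_analysis.
Import Order.TTheory GRing.Theory Num.Theory.
Import numFieldNormedType.Exports.
Local Open Scope classical_set_scope.
Local Open Scope ring_scope.

(* At a point x where the sublevel set A_{phi x} has a unique outer normal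
   eta, the supporting half-space {z | <eta, z - x> <= 0} contains A_{phi x},
   so the sup defining psi at T x = phi x eta is attained at x itself.  Hence
   psi (T x) = <x, T x> for mu-a.e. x; since T pushes mu to nu and T^-1 inverts
   T on both sides almost everywhere, y = T (T^-1 y) transfers this to nu-a.e. y. *)

Section euclidean.
Variables (R : realType) (d : nat).
Implicit Types a b : 'rV[R]_d.

Lemma dotvC a b : dotv a b = dotv b a.
Proof. by apply: eq_bigr => i _; rewrite mulrC. Qed.

Lemma dotvZl c a b : dotv (c *: a) b = c * dotv a b.
Proof. by rewrite /dotv mulr_sumr; apply: eq_bigr => i _; rewrite mxE mulrA. Qed.

Lemma dotvZr c a b : dotv a (c *: b) = c * dotv a b.
Proof. by rewrite dotvC dotvZl dotvC. Qed.

Lemma dotvBr a b c : dotv a (b - c) = dotv a b - dotv a c.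
Proof. by rewrite /dotv -sumrB; apply: eq_bigr => i _; rewrite !mxE mulrBr. Qed.

Lemma dotvv_ge0 a : 0 <= dotv a a.
Proof. by apply: sumr_ge0 => i _; rewrite -expr2 sqr_ge0. Qed.

Lemma enormZ_unit c a : 0 <= c -> enorm a = 1 -> enorm (c *: a) = c.
Proof.
move=> c_ge0 a1; have aa1 : dotv a a = 1.
  by rewrite -[dotv a a]sqr_sqrtr ?dotvv_ge0 // -/(enorm a) a1 expr1n.
by rewrite /enorm dotvZl dotvZr aa1 mulr1 -expr2 sqrtr_sqr ger0_norm.
Qed.

Lemma psi_normal (A : set 'rV[R]_d) (phi : 'rV[R]_d -> R) x eta :
  A x -> 0 <= phi x ->
  normal_cone (sublevel A phi (phi x)) x = [set eta] ->
  psi A phi (phi x *: eta) = (dotv x (phi x *: eta))%:E.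
Proof.
move=> Ax phix_ge0 Nx; have [eta1 supp] : normal_cone (sublevel A phi (phi x)) x eta.
  by rewrite Nx.
rewrite /psi enormZ_unit //; apply/le_anti/andP; split.
- apply: ge_ereal_sup => _ [z Az <-]; rewrite lee_fin !dotvZr.
  by apply: ler_wpM2l => //; rewrite -subr_le0 !(dotvC _ eta) -dotvBr supp.
- by apply: ereal_sup_ubound; exists x.
Qed.

End euclidean.

Section ae_transport.
Context {dX dY : measure_display} {X : measurableType dX} {Y : measurableType dY}.
Context {R : realType} {mu : {measure set X -> \bar R}} {nu : {measure set Y -> \bar R}}.
Context {T : X -> Y} {Tinv : Y -> X}.
Hypotheses (T_meas : measurable_fun setT T) (Tinv_meas : measurable_fun setT Tinv).
Hypothesis T_push : forall E, measurable E -> mu (T @^-1` E) = nu E.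
Hypothesis TinvK : {ae mu, forall x, Tinv (T x) = x}.

Lemma ae_comp_inverse {P : X -> Prop} :
  {ae mu, forall x, P x} -> {ae nu, forall y, P (Tinv y)}.
Proof.
move=> [N [mN muN0 notPN]].
have mTinvN : measurable (Tinv @^-1` N) by rewrite -[_ @^-1` _]setTI; exact: Tinv_meas.
have mTTinvN : measurable (T @^-1` (Tinv @^-1` N)).
  by rewrite -[_ @^-1` _]setTI; exact: T_meas.
have notN : {ae mu, forall x, ~ N x}.
  by apply: (negligibleS (A := N)) => [x /contrapT|]; last exact/negligibleP.
have nuN : {ae nu, forall y, ~ N (Tinv y)}.
  apply: (negligibleS (A := Tinv @^-1` N)) => [y /contrapT //|].
  apply/negligibleP => //; transitivity (mu (T @^-1` (Tinv @^-1` N))).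
    exact/esym/T_push.
  have notNTT : {ae mu, forall x, ~ N (Tinv (T x))}.
    by apply: filterS2 TinvK notN => x ->.
  by apply: measure_negligible => //; apply: negligibleS notNTT => x Nx /(_ Nx).
by apply: filterS nuN => y notNy; apply: contrapT => /notPN/notNy.
Qed.
End ae_transport.

Theorem lemma12 (R : realType) (d : nat) (hd : (2 <= d)%N)
  (leb : {measure set (Rd R d) -> \bar R}) (hleb : is_lebesgue leb)
  (A : set 'rV[R]_d) (hAc : compact A) (hAv : convex_setRd A)
  (mu : probability (Rd R d) R) (hmu : equiv_leb_on leb mu A)
  (r : R) (hr : 0 < r)
  (nu : probability (Rd R d) R) (hnu : equiv_leb_on leb nu (cballR r))
  (phi : 'rV[R]_d -> R) (hphic : {within A, continuous phi})
  (hphir : forall x, A x -> 0 <= phi x <= r)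
  (hphiv : forall s, convex_setRd (sublevel A phi s))
  (T : Rd R d -> Rd R d) (hTm : measurable_fun setT T)
  (hTdef : {ae mu, forall x : Rd R d,
     exists eta, normal_cone (sublevel A phi (phi x)) x = [set eta]})
  (hT : {ae mu, forall x : Rd R d, forall eta,
     normal_cone (sublevel A phi (phi x)) x = [set eta] ->
     T x = phi x *: eta})
  (hpush : forall E, measurable E -> mu (T @^-1` E) = nu E)
  (Tinv : Rd R d -> Rd R d) (hTinvm : measurable_fun setT Tinv)
  (hTinvA : forall y, cballR r y -> A (Tinv y))
  (hTTinv : {ae nu, forall y : Rd R d, T (Tinv y) = y})
  (hTinvT : {ae mu, forall x : Rd R d, Tinv (T x) = x}) :
  {ae nu, forall y : Rd R d, psi A phi y = (dotv (Tinv y) y)%:E}.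
Proof.
have ae_mu := ae_filter_ringOfSetsType mu.
have ae_nu := ae_filter_ringOfSetsType nu.
have muA : {ae mu, forall x : Rd R d, A x}.
  have mAC : measurable (~` A : set (Rd R d)).
    by apply: sub_sigma_algebra; apply: closed_openC; exact: compact_closed.
  by apply/negligibleP => //; case: hmu.
have psiT : {ae mu, forall x : Rd R d, psi A phi (T x) = (dotv x (T x))%:E}.
  apply: filterS3 muA hTdef hT => x Ax [eta Nx] /(_ _ Nx) ->.
  by apply: psi_normal => //; case/andP: (hphir _ Ax).
have := ae_comp_inverse hTm hTinvm hpush hTinvT psiT.
apply: filterS2 hTTinv.
by move=> y TTy psiTy; rewrite -[in LHS]TTy psiTy TTy.
Qed.
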